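(* Let $\{c_k\}_{k\ge1}$ be i.i.d. random variables whose common distribution is absolutely continuous on $[0,1]$ with almost everywhere positive and uniformly bounded density, let $\lambda>0$ and $l_k=e^{-\lambda k}$, and let $q(n)=\lfloor\log_2(\log n)\rfloor$. Then almost surely the following holds: for every $\varepsilon>0$ there exists $\delta>0$ such that for all sufficiently large $n$ and all $n',n''\in\{n,2n,\dots,2^{q(n)}n\}$, $$\frac{1}{\#(\mathcal{A}_{n'}\times\mathcal{A}_{n''})}\sum_{\substack{i\in\mathcal{A}_{n'},\,j\in\mathcal{A}_{n''}\\ i\ne j,\ |c_i-c_j|<\delta}}(-\log|c_i-c_j|)<\varepsilon.$$
   Context: $\mathcal{A}_n=\{n,\dots,2n-1\}$. *)

From HB Require Import structures.
From mathcomp Require Import all_boot all_order all_algebra.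
From mathcomp Require Import all_classical all_reals all_analysis.
Set Implicit Arguments. Unset Strict Implicit. Unset Printing Implicit Defensive.
Import Order.TTheory GRing.Theory Num.Theory.
Local Open Scope classical_set_scope.
Local Open Scope ring_scope.

Definition mutually_independent {d} {T : measurableType d} {R : realType}
  (P : probability T R) (I : set nat) (c : nat -> T -> R) : Prop :=
  forall (s : seq nat) (A : nat -> set R),
    uniq s -> {subset s <= I} -> (forall i, measurable (A i)) ->
    P (\bigcap_(i in [set` s]) (c i @^-1` A i)) =
    (\big[*%E/1%E]_(i <- s) P (c i @^-1` A i))%E.

Definition qlog {R : realType} (n : nat) : int :=
  Num.floor (ln (ln (n%:R : R)) / ln (2 : R)).

From HB Require Import structures.
From mathcomp Require Import all_boot all_order all_algebra.
From mathcomp Require Import all_classical all_reals all_analysis.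
From mathcomp Require Import ring lra zify.
Import Order.TTheory GRing.Theory Num.Theory.
Local Open Scope classical_set_scope.
Local Open Scope ring_scope.

(* Cut the indices into dyadic blocks [2^p, 2^(p+1)) and call the scale p bad if
   some window of length 3 2^-m (m < 3p + 7) contains many more of the values c_k,
   2^p <= k < 2^(p+2), than the O(M 2^(p-m)) allowed by the density bound M, or if two of
   c_1, ..., c_(2^p) are closer than 2^(-3p).  Independence and a binomial tail bound
   make scale p bad with probability O(2^-p), so by Borel-Cantelli almost surely only
   finitely many scales are bad.  At a good scale and for delta = 2^-K, the separation
   gives -ln |c_i - c_j| <= sum_(K <= m < 3p + 6) (m + 1) ln 2 [|c_i - c_j| < 2^-m], and
   the window counts bound the number of pairs at level m by n n' (M 2^-m + p 2^-p);
   summing over m leaves O(M K^3 2^-K + p^3 2^-p), small once K and p are large. *)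

Section measure_big_setU.
Context {d} {T : measurableType d} {R : realType} (mu : {measure set T -> \bar R}).

Lemma measure_big_setU_le (b : R) {I : eqType} {s : seq I} {F : I -> set T} :
  (forall i, measurable (F i)) -> (forall i, i \in s -> (mu (F i) <= b%:E)%E) ->
  (mu (\big[setU/set0]_(i <- s) F i) <= ((size s)%:R * b)%:E)%E.
Proof.
move=> mF; elim: s => [|x s IH] Fb; first by rewrite big_nil measure0 mul0r.
rewrite big_cons /= -nat1r mulrDl mul1r EFinD.
apply: le_trans (measureU2 _ _ _) _ => //; first exact: bigsetU_measurable.
apply: leeD; first by apply: Fb; rewrite mem_head.
by apply: IH => i si; apply: Fb; rewrite inE si orbT.
Qed.

End measure_big_setU.

Lemma prode_le_expr {R : realType} {I : eqType} (s : seq I) (x : I -> \bar R) (b : R) :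
  (forall i, i \in s -> (0 <= x i <= b%:E)%E) ->
  (\big[*%E/1%E]_(i <- s) x i <= (b ^+ size s)%:E)%E.
Proof.
elim: s => [|y s IH] xb; first by rewrite big_nil expr0.
have xb' i : i \in s -> (0 <= x i <= b%:E)%E by move=> si; apply: xb; rewrite inE si orbT.
have /andP[x0 xyb] := xb y (mem_head _ _).
rewrite big_cons /= exprS EFinM; apply: lee_pmul => //; last exact: IH.
by rewrite big_seq; apply: prode_ge0 => i /xb' /andP[].
Qed.

Definition at_least_in {d} {T : measurableType d} {R : realType} (c : nat -> T -> R)
    {L} (g : 'I_L -> nat) (r : nat) (A : set R) : set T :=
  \big[setU/set0]_(S <- enum [set S : {set 'I_L} | #|S| == r]%SET)
     \bigcap_(i in [set` map g (enum S)]) c i @^-1` A.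

Section at_least_in.
Context {d} {T : measurableType d} {R : realType} {P : probability T R}.
Context {I : set nat} {c : nat -> T -> R}.
Hypothesis c_meas : forall k, I k -> measurable_fun setT (c k).
Hypothesis c_indep : mutually_independent P I c.

Lemma preimage_measurable k A : I k -> measurable A -> measurable (c k @^-1` A).
Proof. by move=> Ik mA; rewrite -[_ @^-1` _]setTI; exact: c_meas. Qed.

Lemma bigcap_preimage_measurable (s : seq nat) A : {subset s <= I} -> measurable A ->
  measurable (\bigcap_(i in [set` s]) c i @^-1` A).
Proof.
move=> sI mA; rewrite bigcap_seq big_seq.
apply: (big_ind (fun B => measurable B)) => //; first exact: measurableI.
by move=> k /sI /set_mem Ik; exact: preimage_measurable.
Qed.

Lemma at_least_in_measurable {L} (g : 'I_L -> nat) r A :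
  (forall k, I (g k)) -> measurable A -> measurable (at_least_in c g r A).
Proof.
move=> gI mA; apply: bigsetU_measurable => S _.
by apply: bigcap_preimage_measurable => // _ /mapP[k _ ->]; exact: mem_set.
Qed.

Lemma at_least_in_le {L} (g : 'I_L -> nat) r A (rho : R) :
  injective g -> (forall k, I (g k)) -> measurable A ->
  (forall k, (P (c (g k) @^-1` A) <= rho%:E)%E) ->
  (P (at_least_in c g r A) <= ('C(L, r)%:R * rho ^+ r)%:E)%E.
Proof.
move=> g_inj gI mA rhoP.
have gsI (S : {set 'I_L}) : {subset map g (enum S) <= I}.
  by move=> _ /mapP[k _ ->]; exact: mem_set.
apply: le_trans (measure_big_setU_le P (rho ^+ r) _ _) _.
- by move=> S; exact: bigcap_preimage_measurable.
- move=> S; rewrite mem_enum inE => /eqP cardS.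
  have uS : uniq (map g (enum S)) by rewrite (map_inj_uniq g_inj) enum_uniq.
  have := @c_indep _ (fun=> A) uS (gsI S) (fun=> mA); rewrite /= => ->.
  rewrite -cardS cardE -(size_map g); apply: prode_le_expr => _ /mapP[k _ ->].
  by rewrite measure_ge0 rhoP.
- by rewrite -cardE -[X in 'C(X, _)](card_ord L) -card_draws.
Qed.

Lemma at_least_in_card {L} (g : 'I_L -> nat) r A w :
  (r <= #|[set k : 'I_L | c (g k) w \in A]%SET|)%N -> at_least_in c g r A w.
Proof.
move=> /card_geqP[s [s_uniq s_size sA]].
rewrite /at_least_in -bigcup_seq; exists [set k in s]%SET.
  by rewrite /= mem_enum inE cardsE -s_size; apply/eqP/card_uniqP.
move=> i /= /mapP[k]; rewrite mem_enum inE => ks ->.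
by have := sA k ks; rewrite inE => /set_mem.
Qed.

End at_least_in.

Definition dyadic_window {R : realType} (m u : nat) : set R :=
  `[(u%:R - 1) / 2 ^+ m, (u%:R + 2) / 2 ^+ m[%classic.

Lemma dyadic_window_measurable {R : realType} m u : measurable (@dyadic_window R m u).
Proof. exact: measurable_itv. Qed.

Lemma dyadic_window_near {R : realType} {y z : R} {m} : 0 <= y <= 1 -> `|y - z| < (2 ^+ m)^-1 ->
  (Num.truncn (y * 2 ^+ m) <= 2 ^ m)%N /\ dyadic_window m (Num.truncn (y * 2 ^+ m)) z.
Proof.
move=> /andP[y0 y1] yz.
have t0 : 0 < 2 ^+ m :> R by rewrite exprn_gt0.
have /andP[u_le u_gt] := truncn_itv (mulr_ge0 y0 (ltW t0)).
set u := Num.truncn _ in u_le u_gt *.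
have : `|y * 2 ^+ m - z * 2 ^+ m| < 1.
  by rewrite -mulrBl normrM (gtr0_norm t0) -ltr_pdivlMr // div1r.
rewrite ltr_norml => /andP[yz1 yz2]; split.
  rewrite -(ler_nat R) natrX; apply: le_trans u_le _.
  by rewrite -[X in _ <= X]mul1r ler_wpM2r // ltW.
rewrite /dyadic_window /= in_itv /= ler_pdivrMr // ltr_pdivlMr //.
rewrite -natr1 in u_gt; apply/andP; split; lra.
Qed.

Section bounded_density.
Context {d} {T : measurableType d} {R : realType} {P : probability T R}.
Context {X : T -> R} {f : R -> R} {M : R}.
Hypothesis f_meas : measurable_fun setT f.
Hypothesis f_ge0 : forall x, 0 <= f x.
Hypothesis f_le : forall x, f x <= M.
Hypothesis X_density : forall A : set R, measurable A ->
  P (X @^-1` A) = (\int[@lebesgue_measure R]_(x in A `&` `[0%R, 1%R]%classic) (f x)%:E)%E.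

Lemma prob_itv_le (a b : R) : a < b -> (P (X @^-1` `[a, b[%classic) <= (M * (b - a))%:E)%E.
Proof.
move=> ab; have M0 : 0 <= M := le_trans (f_ge0 0) (f_le 0).
have mab : measurable (`[a, b[%classic : set R) by exact: measurable_itv.
have mD : measurable (`[a, b[%classic `&` `[0%R, 1%R]%classic : set R).
  by apply: measurableI => //; exact: measurable_itv.
rewrite X_density //; apply: le_trans (_ : (\int[@lebesgue_measure R]_(x in
    `[a, b[%classic `&` `[0%R, 1%R]%classic) (cst M%:E x) <= _)%E).
  apply: ge0_le_integral => //.
  - by move=> x _; rewrite lee_fin.
  - by apply/measurable_realfun.measurable_EFinP; exact: measurable_funS f_meas.
  - by move=> x _; rewrite lee_fin.
rewrite integral_cst // EFinM; apply: lee_pmul; rewrite ?lee_fin //.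
apply: (@le_trans _ _ (lebesgue_measure (`[a, b[%classic : set R))).
  by apply: le_measure; rewrite ?inE.
by rewrite lebesgue_measure_itv /= lte_fin ab -EFinD.
Qed.

Lemma prob_dyadic_window_le m u : (P (X @^-1` dyadic_window m u) <= (3 * M / 2 ^+ m)%:E)%E.
Proof.
have t0 : 0 < 2 ^+ m :> R by rewrite exprn_gt0.
have lt_ends : (u%:R - 1) / 2 ^+ m < (u%:R + 2) / 2 ^+ m :> R.
  by rewrite ltr_pM2r ?invr_gt0 // ltrD2l; lra.
rewrite /dyadic_window; apply: le_trans (prob_itv_le _ _ lt_ends) _.
by rewrite lee_fin le_eqVlt; apply: predU1l; field; rewrite gt_eqF.
Qed.

Lemma prob_notin01 : P (X @^-1` ~` `[0%R, 1%R]%classic) = 0%E.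
Proof.
rewrite X_density; last by apply: measurableC; exact: measurable_itv.
by rewrite setICl integral_set0.
Qed.

End bounded_density.

Lemma leq_sum_nat_subrange (F : nat -> nat) a b a' b' : (a' <= a)%N -> (b <= b')%N ->
  (\sum_(a <= j < b) F j <= \sum_(a' <= j < b') F j)%N.
Proof.
move=> a'a bb'; have [ba|ab] := leqP b a; first by rewrite big_geq.
have ab' : (a <= b')%N by apply: leq_trans bb'; exact: ltnW.
rewrite (@big_cat_nat _ _ _ a a' b') //= (@big_cat_nat _ _ _ b a b') //=; last exact: ltnW.
by rewrite addnC -addnA leq_addr.
Qed.

Definition block_index p : 'I_(3 * 2 ^ p) -> nat := fun k => (2 ^ p + k)%N.
Definition initial_index t : 'I_(2 ^ t) -> nat := fun k => k.+1.

Lemma block_index_inj p : injective (block_index p).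
Proof. by move=> a b /eqP; rewrite /block_index eqn_add2l => /eqP /val_inj. Qed.

Lemma block_index_gt0 p k : (0 < block_index p k)%N.
Proof. by rewrite /block_index addn_gt0 expn_gt0. Qed.

Lemma initial_index_inj t : injective (initial_index t).
Proof. by move=> a b [] /val_inj. Qed.

Lemma count_dyadic_block_le (Q : pred nat) (p n : nat) :
  (2 ^ p <= n)%N -> (n < 2 ^ p.+1)%N ->
  (\sum_(n <= j < 2 * n) Q j <= #|[set k | Q (block_index p k)]%SET|)%N.
Proof.
move=> pn np.
have -> : #|[set k | Q (block_index p k)]%SET| =
    (\sum_(0 <= k < 3 * 2 ^ p) Q (2 ^ p + k)%N)%N.
  rewrite big_mkord -sum1_card big_mkcond /=.
  by apply: eq_bigr => k _; rewrite !inE; case: (Q _).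
have -> : (\sum_(0 <= k < 3 * 2 ^ p) Q (2 ^ p + k) =
    \sum_(0 + 2 ^ p <= j < 2 ^ p + 3 * 2 ^ p) Q j)%N.
  by rewrite big_addn addKn; apply: eq_bigr => k _; rewrite addnC.
apply: leq_sum_nat_subrange; first by rewrite add0n.
by rewrite expnS in np; lia.
Qed.

Lemma bin_fact_leq_expn n r : ('C(n, r) * r`! <= n ^ r)%N.
Proof.
rewrite bin_ffact; elim: r n => [|r IH] n; first by rewrite ffactn0 expn0.
rewrite ffactnS expnS leq_mul2l; apply/orP; right.
apply: leq_trans (IH _) _; case: r {IH} => [|r]; first by rewrite !expn0.
by rewrite leq_exp2r // leq_pred.
Qed.

Section real_bounds.
Context {R : realType}.

Lemma expn_le_4expn_fact (r : nat) : (r%:R : R) ^+ r <= 4 ^+ r * (r`!)%:R.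
Proof.
case: r => [|n]; first by rewrite !expr0 mul1r fact0.
have e_half : expR (2^-1 : R) <= 2.
  have := expR_ge1Dx (- 2^-1 : R); rewrite expRN => h.
  rewrite -lef_pV2 ?posrE ?expR_gt0 //; apply: le_trans h; lra.
have h := @expR_ge1Dxn R (n.+1%:R / 2) n (divr_ge0 (ler0n _ _) (ler0n _ 2)).
have e2 : expR (n.+1%:R / 2 : R) <= 2 ^+ n.+1.
  by rewrite mulrC expRM_natr; apply: lerXn2r; rewrite ?nnegrE ?expR_ge0.
have : (n.+1%:R / 2) ^+ n.+1 / (n.+1)`!%:R <= 2 ^+ n.+1 :> R.
  by apply: le_trans _ (le_trans h e2); lra.
have F0 : 0 < (n.+1)`!%:R :> R by rewrite ltr0n fact_gt0.
have t0 : 0 < 2 ^+ n.+1 :> R by rewrite exprn_gt0.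
rewrite expr_div_n ler_pdivrMr // ler_pdivrMr // => H.
by rewrite (_ : 4 = 2 * 2 :> R) ?exprMn; [rewrite -mulrA mulrC|rewrite -natrM].
Qed.

(* The factor 8 absorbs r^r <= 4^r r! together with the extra 2^-r. *)
Lemma binomial_tail_le (L r : nat) (rho : R) : 0 <= rho ->
  8 * L%:R * rho <= r%:R -> 'C(L, r)%:R * rho ^+ r <= (2 ^+ r)^-1.
Proof.
move=> rho0 hr.
have F0 : 0 < r`!%:R :> R by rewrite ltr0n fact_gt0.
have t0 : 0 < 2 ^+ r :> R by rewrite exprn_gt0.
have hC : 'C(L, r)%:R * r`!%:R <= L%:R ^+ r :> R.
  by rewrite -natrM -natrX ler_nat bin_fact_leq_expn.
have hP : (8 * L%:R * rho) ^+ r <= r%:R ^+ r.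
  by apply: lerXn2r; rewrite ?nnegrE // !mulr_ge0.
have key : 2 ^+ r * (L%:R ^+ r * rho ^+ r) <= r`!%:R.
  have h4 : 0 < 4 ^+ r :> R by rewrite exprn_gt0.
  rewrite -(ler_pM2l h4); apply: le_trans (le_trans hP (expn_le_4expn_fact r)).
  rewrite (_ : (8:R) = 4 * 2); last by rewrite -natrM.
  by rewrite !exprMn le_eqVlt; apply: predU1l; ring.
rewrite -(ler_pM2l t0) mulfV ?gt_eqF // -(ler_pM2r F0) mul1r.
apply: le_trans key; rewrite -mulrA ler_pM2l // mulrAC.
by apply: ler_wpM2r hC; exact: exprn_ge0.
Qed.

Lemma neg_ln_le_dyadic (x : R) k : (2 ^+ k.+1)^-1 <= x -> - ln x <= k.+1%:R * ln 2.
Proof.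
move=> kx; have t0 : 0 < (2 ^+ k.+1 : R) by rewrite exprn_gt0.
have x0 : 0 < x by apply: lt_le_trans kx; rewrite invr_gt0.
rewrite lerNl -mulNr (_ : - k.+1%:R * ln 2 = ln ((2 ^+ k.+1)^-1)).
  by rewrite ler_ln ?posrE ?invr_gt0.
by rewrite lnV ?posrE // lnXn // mulNr mulr_natl.
Qed.

Lemma neg_ln_le_levels (x : R) K D : (2 ^+ (K + D).+1)^-1 <= x -> x < (2 ^+ K)^-1 ->
  - ln x <= \sum_(K <= m < (K + D).+1) m.+1%:R * ln 2 * (x < (2 ^+ m)^-1)%R%:R.
Proof.
have ln2_gt0 : 0 < ln (2 : R) by rewrite ln_gt0 // ltr1n.
elim: D K => [|D IH] K Dx xK.
  by rewrite addn0 big_nat1 xK mulr1; apply: neg_ln_le_dyadic; rewrite addn0 in Dx.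
rewrite big_ltn ?ltnS ?leq_addr // xK mulr1 -addSnnS.
have [xK1|K1x] := ltP x (2 ^+ K.+1)^-1.
  apply: le_trans (IH K.+1 _ xK1) _; first by rewrite addSnnS.
  by rewrite lerDr mulr_ge0 // ltW.
apply: le_trans (neg_ln_le_dyadic _ _ K1x) _; rewrite lerDl.
by apply: sumr_ge0 => m _; rewrite !mulr_ge0 // ltW.
Qed.

Lemma sum_level_weights_le K D :
  \sum_(K <= m < K + D) m.+1%:R / (2 ^+ m : R) <= (2 * K%:R + 4) / 2 ^+ K.
Proof.
elim: D K => [|D IH] K.
  by rewrite addn0 big_geq // divr_ge0 ?exprn_ge0 // addr_ge0 // mulr_ge0.
rewrite big_ltn; last lia.
rewrite -addSnnS.
apply: le_trans (lerD (le_refl _) (IH K.+1)) _.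
have t0 : 0 < (2 ^+ K : R) by rewrite exprn_gt0.
by rewrite exprS invfM -natr1 le_eqVlt; apply: predU1l; field; rewrite gt_eqF.
Qed.

Lemma cube_div_exp2_eventually_lt (C eta : R) : 0 <= C -> 0 < eta ->
  exists k0, forall k, (k0 <= k)%N -> C * (k%:R + 4) ^+ 3 / 2 ^+ k < eta.
Proof.
move=> C0 eta0.
have pow4 k : ((k + 4) ^ 4 <= 2 ^ (k + 11))%N.
  elim: k => [//|k IH]; have [k2|] := leqP 2 k; last by case: k IH => [|[|]].
  rewrite (_ : k.+1 + 11 = (k + 11).+1)%N // (expnS 2 (k + 11)).
  apply: (@leq_trans (2 * (k + 4) ^ 4)); first by rewrite addSn; nia.
  by rewrite leq_mul2l IH orbT.
exists (Num.truncn (C * 2 ^+ 11 / eta)).+1 => k k0k.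
have k4 : 0 < k%:R + 4 :> R by rewrite ltr_wpDl.
have t0 : 0 < 2 ^+ k :> R by rewrite exprn_gt0.
have : (k%:R + 4) ^+ 3 / 2 ^+ k <= 2 ^+ 11 / (k%:R + 4) :> R.
  rewrite ler_pdivrMr // mulrAC ler_pdivlMr // -exprSr mulrC -exprD.
  by have := pow4 k; rewrite -(ler_nat R) !natrX natrD.
move=> /(ler_wpM2l C0); rewrite mulrA => /le_lt_trans; apply.
rewrite mulrA ltr_pdivrMr // -ltr_pdivrMl // mulrC; apply: lt_le_trans (truncnS_gt _) _.
by apply: le_trans (_ : k%:R <= _); [rewrite ler_nat | rewrite lerDl].
Qed.

End real_bounds.

Section pair_log_sums.
Context {R : realType}.
Implicit Types (x : nat -> R) (M delta : R).

Definition log_pair_sum x (n1 n2 : nat) delta : R :=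
  \sum_(n1 <= i < 2 * n1) \sum_(n2 <= j < 2 * n2 | (i != j) && (`|x i - x j| < delta))
     (- ln `|x i - x j|).

Definition close_pairs x (n1 n2 m : nat) : R :=
  \sum_(n1 <= i < 2 * n1) \sum_(n2 <= j < 2 * n2) (`|x i - x j| < (2 ^+ m)^-1)%R%:R.

Definition window_count_bound M (p m : nat) : R :=
  72 * M * 2 ^+ p / 2 ^+ m + (5 * p + 16)%N%:R.

Lemma log_pair_sum_sym x n1 n2 delta : log_pair_sum x n1 n2 delta = log_pair_sum x n2 n1 delta.
Proof.
rewrite /log_pair_sum; under eq_bigr do rewrite big_mkcond.
under [RHS]eq_bigr do rewrite big_mkcond.
rewrite exchange_big; apply: eq_bigr => j _; apply: eq_bigr => i _.
by rewrite eq_sym distrC.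
Qed.

Lemma log_pair_sum_le_close_pairs x (p n1 n2 K : nat) :
  (0 < n1)%N -> (n1 <= n2)%N -> (n2 < 2 ^ p.+1)%N -> (K <= 3 * p + 5)%N ->
  (forall i j, (0 < i)%N -> (0 < j)%N -> (i < 2 ^ (p + 2))%N -> (j < 2 ^ (p + 2))%N ->
     i != j -> (2 ^+ (3 * p + 6))^-1 <= `|x i - x j|) ->
  log_pair_sum x n1 n2 (2 ^+ K)^-1 <=
    \sum_(K <= m < 3 * p + 6) m.+1%:R * ln 2 * close_pairs x n1 n2 m.
Proof.
move=> n1_gt0 n12 n2p Kp x_sep.
have ln2_gt0 : 0 < ln (2 : R) by rewrite ln_gt0 // ltr1n.
have levels : (3 * p + 6 = (K + (3 * p + 5 - K)).+1)%N by lia.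
pose G i j m := m.+1%:R * ln (2 : R) * (`|x i - x j| < (2 ^+ m)^-1)%R%:R.
apply: (@le_trans _ _ (\sum_(n1 <= i < 2 * n1) \sum_(n2 <= j < 2 * n2)
    \sum_(K <= m < 3 * p + 6) G i j m)).
  apply: ler_sum_nat => i /andP[i1 i2]; rewrite big_mkcond.
  apply: ler_sum_nat => j /andP[j1 j2]; case: ifP => [/andP[ij xijK]|_].
    rewrite levels; apply: neg_ln_le_levels => //; rewrite -levels.
    by apply: x_sep => //; rewrite ?expnD ?expnS in n2p *; lia.
  by apply: sumr_ge0 => m _; rewrite !mulr_ge0 // ltW.
rewrite le_eqVlt; apply: predU1l.
under eq_bigr do rewrite exchange_big; rewrite exchange_big.
apply: eq_bigr => m _; rewrite mulr_sumr; apply: eq_bigr => i _.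
by rewrite mulr_sumr.
Qed.

Lemma close_pairs_le x (n1 n2 m : nat) (b : R) :
  (forall i, (n1 <= i < 2 * n1)%N -> 0 <= x i <= 1) ->
  (forall y, 0 <= y <= 1 -> \sum_(n2 <= j < 2 * n2) (`|y - x j| < (2 ^+ m)^-1)%R%:R <= b) ->
  close_pairs x n1 n2 m <= n1%:R * b.
Proof.
move=> x01 count_le; apply: le_trans (_ : \sum_(n1 <= i < 2 * n1) b <= _).
  by apply: ler_sum_nat => i i_in; apply/count_le/x01.
by rewrite sumr_const_nat mulr_natl (_ : 2 * n1 - n1 = n1)%N //; lia.
Qed.

Lemma level_term_le M (p n2 m : nat) (n1 : R) : 0 <= M -> 0 <= n1 -> (2 ^ p <= n2)%N ->
  m.+1%:R * ln 2 * (n1 * window_count_bound M p m) <=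
    n1 * n2%:R * (144 * M * (m.+1%:R / 2 ^+ m) + 2 * (5 * p + 16)%N%:R / 2 ^+ p * m.+1%:R).
Proof.
move=> M0 n1_ge0 pn2.
have pR : 0 < 2 ^+ p :> R by rewrite exprn_gt0.
have mR : 0 < 2 ^+ m :> R by rewrite exprn_gt0.
have pn2R : 2 ^+ p <= n2%:R :> R by rewrite -natrX ler_nat.
have ln2_gt0 : 0 < ln (2 : R) by rewrite ln_gt0 // ltr1n.
have ln2_le2 : ln (2 : R) <= 2 by apply/ltW/ln_sublinear.
pose a := M / 2 ^+ m; pose b := (5 * p + 16)%N%:R / 2 ^+ p : R.
have a0 : 0 <= a by rewrite divr_ge0 // ltW.
have b0 : 0 <= b by rewrite divr_ge0 // ltW.
have -> : m.+1%:R * ln 2 * (n1 * window_count_bound M p m) =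
    (m.+1%:R * n1 * (72 * a + b)) * (ln 2 * 2 ^+ p).
  by rewrite /window_count_bound /a /b; field; rewrite !gt_eqF.
have -> : n1 * n2%:R * (144 * M * (m.+1%:R / 2 ^+ m) + 2 * (5 * p + 16)%N%:R / 2 ^+ p * m.+1%:R) =
    (m.+1%:R * n1 * (72 * a + b)) * (2 * n2%:R).
  by rewrite /a /b; field; rewrite !gt_eqF.
apply: ler_wpM2l; first by rewrite !mulr_ge0 // addr_ge0 // mulr_ge0.
by apply: ler_pM => //; exact: ltW.
Qed.

Lemma sum_level_terms_le M (p n2 K : nat) (n1 : R) : 0 <= M -> 0 <= n1 -> (2 ^ p <= n2)%N ->
  (K <= 3 * p + 6)%N ->
  \sum_(K <= m < 3 * p + 6) m.+1%:R * ln 2 * (n1 * window_count_bound M p m) <=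
    n1 * n2%:R * (288 * M * (K%:R + 4) ^+ 3 / 2 ^+ K + 90 * (p%:R + 4) ^+ 3 / 2 ^+ p).
Proof.
move=> M0 n1_ge0 pn2 Kp.
have pR : 0 < 2 ^+ p :> R by rewrite exprn_gt0.
have KR : 0 < 2 ^+ K :> R by rewrite exprn_gt0.
apply: le_trans (ler_sum_nat (fun m _ => level_term_le M p n2 m n1 M0 n1_ge0 pn2)) _.
rewrite -mulr_sumr big_split /= -!mulr_sumr; apply: ler_wpM2l.
  by rewrite mulr_ge0.
apply: lerD.
  apply: le_trans (_ : 144 * M * ((2 * K%:R + 4) / 2 ^+ K) <= _).
    rewrite ler_wpM2l ?mulr_ge0 //.
    by rewrite (_ : 3 * p + 6 = K + (3 * p + 6 - K))%N ?sum_level_weights_le //; lia.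
  rewrite mulrA ler_pM2r ?invr_gt0 //.
  rewrite (_ : 288 * M * _ = 144 * M * (2 * (K%:R + 4) ^+ 3)); last by ring.
  rewrite ler_wpM2l ?mulr_ge0 //; have K0 : 0 <= K%:R :> R by [].
  have K4 : 1 <= (K%:R + 4) ^+ 2 :> R by nra.
  by rewrite exprS; nra.
apply: le_trans (_ : 2 * (5 * p + 16)%N%:R / 2 ^+ p * (3 * p + 6)%N%:R ^+ 2 <= _).
  apply: ler_wpM2l; first by rewrite divr_ge0 // ltW.
  rewrite -natr_sum -natrX ler_nat.
  apply: leq_trans (_ : \sum_(K <= m < 3 * p + 6) (3 * p + 6) <= _)%N.
    by rewrite big_nat [X in (_ <= X)%N]big_nat; apply: leq_sum => m /andP[_ mB].
  by rewrite sum_nat_const_nat; nia.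
rewrite mulrAC ler_pM2r ?invr_gt0 //; have p0 : 0 <= p%:R :> R by [].
rewrite !natrD ?natrM; nra.
Qed.

End pair_log_sums.

Section bad_scales.
Context {d} {T : measurableType d} {R : realType} {P : probability T R}.
Context {c : nat -> T -> R} {f : R -> R} {M : R}.
Hypothesis c_meas : forall k, (0 < k)%N -> measurable_fun setT (c k).
Hypothesis c_indep : mutually_independent P [set k | (0 < k)%N] c.
Hypothesis f_meas : measurable_fun setT f.
Hypothesis f_ge0 : forall x, 0 <= f x.
Hypothesis f_le : forall x, f x <= M.
Hypothesis c_density : forall k, (0 < k)%N -> forall A : set R, measurable A ->
  P (c k @^-1` A) = (\int[@lebesgue_measure R]_(x in A `&` `[0%R, 1%R]%classic) (f x)%:E)%E.

Let M_ge0 : 0 <= M. Proof. exact: le_trans (f_ge0 0) (f_le 0). Qed.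

(* 72 = 8 * 3 * 3: the factor of binomial_tail_le, 3 * 2^p variables, windows of
   length 3 * 2^-m; the slack 5p + 16 makes the 2^-(5p+16) tail beat the number
   (3p + 7) * (2^m + 1) of windows by a factor 2^-p. *)
Definition window_threshold p m : nat :=
  (Num.truncn (72 * M * 2 ^+ p / 2 ^+ m) + 1 + (5 * p + 16))%N.

Definition crowded_window p : set T :=
  \big[setU/set0]_(m <- iota 0 (3 * p + 7)) \big[setU/set0]_(u <- iota 0 (2 ^ m).+1)
    at_least_in c (block_index p) (window_threshold p m) (dyadic_window m u).

Definition close_pair t : set T :=
  \big[setU/set0]_(u <- iota 0 (2 ^ (3 * t)).+1)
    at_least_in c (initial_index t) 2 (dyadic_window (3 * t) u).

Definition bad_scale p : set T := crowded_window p `|` close_pair p.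

Lemma at_least_in_window_measurable {L} (g : 'I_L -> nat) r m u : (forall k, (0 < g k)%N) ->
  measurable (at_least_in c g r (dyadic_window m u)).
Proof.
move=> g_gt0.
by have := at_least_in_measurable c_meas g r _ g_gt0 (dyadic_window_measurable m u).
Qed.

Lemma bad_scale_measurable p : measurable (bad_scale p).
Proof.
apply: measurableU; apply: bigsetU_measurable => m _.
  apply: bigsetU_measurable => u _.
  by apply: at_least_in_window_measurable; exact: block_index_gt0.
exact: at_least_in_window_measurable.
Qed.

Lemma prob_at_least_in_window_le {L} (g : 'I_L -> nat) r m u :
  injective g -> (forall k, (0 < g k)%N) ->
  (P (at_least_in c g r (dyadic_window m u)) <= ('C(L, r)%:R * (3 * M / 2 ^+ m) ^+ r)%:E)%E.
Proof.
move=> g_inj g_gt0.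
apply: (at_least_in_le c_meas c_indep g r (dyadic_window m u) (3 * M / 2 ^+ m) g_inj g_gt0
  (dyadic_window_measurable m u)) => k.
exact: prob_dyadic_window_le f_meas f_ge0 f_le (c_density _ (g_gt0 k)) m u.
Qed.

Lemma prob_crowded_block_le p m u :
  (P (at_least_in c (block_index p) (window_threshold p m) (dyadic_window m u))
    <= ((2 ^+ (5 * p + 16))^-1)%:E)%E.
Proof.
have mR : 0 < 2 ^+ m :> R by rewrite exprn_gt0.
have rho0 : 0 <= 3 * M / 2 ^+ m by rewrite divr_ge0 ?mulr_ge0 // ltW.
apply: le_trans (prob_at_least_in_window_le _ _ m u (@block_index_inj p) (block_index_gt0 p)) _.
rewrite lee_fin; apply: le_trans (binomial_tail_le _ _ _ rho0 _) _.
  rewrite (_ : 8 * _ * _ = 72 * M * 2 ^+ p / 2 ^+ m); last first.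
    by rewrite natrM natrX; field; rewrite gt_eqF.
  have := truncnS_gt (72 * M * 2 ^+ p / 2 ^+ m).
  have : 0 <= (5 * p + 16)%N%:R :> R by [].
  by rewrite /window_threshold -natr1 !natrD; lra.
rewrite lef_pV2 ?posrE ?exprn_gt0 // ler_eXn2l ?ltr1n //.
by rewrite /window_threshold leq_addl.
Qed.

Lemma prob_crowded_window_le p : (P (crowded_window p) <= ((2 ^+ p)^-1)%:E)%E.
Proof.
have tailR : 0 < 2 ^+ (5 * p + 16) :> R by rewrite exprn_gt0.
have pR : 0 < 2 ^+ p :> R by rewrite exprn_gt0.
have block_meas m u : measurable
    (at_least_in c (block_index p) (window_threshold p m) (dyadic_window m u)).
  by apply: at_least_in_window_measurable; exact: block_index_gt0.
apply: le_trans (measure_big_setU_le P (2 ^+ (3 * p + 7) * (2 ^+ (5 * p + 16))^-1) _ _) _.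
- by move=> m; apply: bigsetU_measurable.
- move=> m; rewrite mem_iota add0n => /andP[_ mp].
  apply: le_trans (measure_big_setU_le P ((2 ^+ (5 * p + 16))^-1) _ _) _ => //.
    by move=> u _; exact: prob_crowded_block_le.
  rewrite size_iota lee_fin ler_wpM2r ?invr_ge0 ?exprn_ge0 //.
  by rewrite -natrX ler_nat ltn_exp2l.
rewrite size_iota lee_fin mulrA ler_pdivrMr // [X in _ <= X]mulrC ler_pdivlMr //.
rewrite -!natrX -!natrM ler_nat.
have lin : (3 * p + 7 <= 2 ^ (p + 9))%N.
  by rewrite expnD -[(2 ^ 9)%N]/512%N; have := @ltn_expl 2 p (ltnSn 1); lia.
apply: leq_trans (_ : (2 ^ (p + 9) * 2 ^ (3 * p + 7) * 2 ^ p <= _)%N).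
  by rewrite !leq_mul2r lin !orbT.
by rewrite -!expnD leq_pexp2l //; lia.
Qed.

Lemma prob_close_pair_le t : (P (close_pair t) <= (18 * M ^+ 2 / 2 ^+ t)%:E)%E.
Proof.
set X := 2 ^+ t : R.
have X0 : 0 < X by rewrite exprn_gt0.
have X3 : (2 : R) ^+ (3 * t) = X ^+ 3 by rewrite mulnC exprM.
apply: le_trans (measure_big_setU_le P (9 * M ^+ 2 / X ^+ 4) _ _) _.
- by move=> u; exact: at_least_in_window_measurable.
- move=> u _; apply: le_trans (prob_at_least_in_window_le _ _ _ _ (@initial_index_inj t) _) _ => //.
  rewrite lee_fin; apply: le_trans (_ : X ^+ 2 * (3 * M / 2 ^+ (3 * t)) ^+ 2 <= _).
    apply: ler_wpM2r; first exact: sqr_ge0.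
    rewrite /X -!natrX ler_nat; have := bin_fact_leq_expn (2 ^ t) 2.
    by rewrite (_ : 2`! = 2)%N //; lia.
  by rewrite X3 le_eqVlt; apply: predU1l; field; rewrite gt_eqF.
rewrite size_iota lee_fin.
have windows : ((2 ^ (3 * t)).+1)%:R <= 2 * X ^+ 3 :> R.
  by rewrite -X3 -natrX -(natrM _ 2) ler_nat mul2n -addnn -addn1 leq_add2l expn_gt0.
apply: le_trans (ler_wpM2r _ windows) _.
  by rewrite divr_ge0 ?mulr_ge0 ?sqr_ge0 // exprn_ge0.
by rewrite le_eqVlt; apply: predU1l; field; rewrite gt_eqF.
Qed.

(* The shape of the bound is the one of cvg_geometric_eseries_half. *)
Lemma prob_bad_scale_le p :
  (P (bad_scale p) <= ((2 * (1 + 18 * M ^+ 2)) / (2 ^ (p + 1))%:R)%:E)%E.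
Proof.
have pR : 0 < 2 ^+ p :> R by rewrite exprn_gt0.
apply: le_trans (measureU2 _ _ _) _.
- apply: bigsetU_measurable => m _; apply: bigsetU_measurable => u _.
  by apply: at_least_in_window_measurable; exact: block_index_gt0.
- by apply: bigsetU_measurable => u _; exact: at_least_in_window_measurable.
apply: le_trans (leeD (prob_crowded_window_le p) (prob_close_pair_le p)) _.
rewrite -EFinD lee_fin natrX addn1 (exprS (2 : R) p).
by rewrite le_eqVlt; apply: predU1l; field; rewrite gt_eqF.
Qed.

Lemma ae_eventually_not_bad :
  {ae P, forall w, exists p0, forall p, (p0 <= p)%N -> ~ bad_scale p w}.
Proof.
have sum_lt : (\sum_(0 <= p <oo) P (bad_scale p) < +oo)%E.
  set r := 2 * (1 + 18 * M ^+ 2).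
  apply: (@le_lt_trans _ _ (\sum_(0 <= p <oo) (r / (2 ^ (p + 1))%:R)%:E)%E).
    by apply: lee_nneseries => p _ //; exact: prob_bad_scale_le.
  have -> : (\sum_(0 <= p <oo) (r / (2 ^ (p + 1))%:R)%:E)%E = (r / 2 ^+ 0)%:E.
    by apply: cvg_lim => //; exact: cvg_geometric_eseries_half.
  exact: ltry.
exists (lim_sup_set bad_scale); split.
- apply: bigcap_measurable; first by exists 0.
  by move=> k _; apply: bigcup_measurable => j _; exact: bad_scale_measurable.
- exact: lim_sup_set_cvg0 bad_scale_measurable sum_lt.
- move=> w /= not_eventually n _; apply: contra_notP not_eventually => not_bad.
  by exists n => p np bad_p; apply: not_bad; exists p.
Qed.

Lemma ae_in01 : {ae P, forall w, forall k, (0 < k)%N -> 0 <= c k w <= 1}.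
Proof.
apply: ae_foralln => -[|k]; first exact: aeW.
exists (c k.+1 @^-1` ~` `[0%R, 1%R]%classic); split.
- by apply: (preimage_measurable c_meas) => //; apply: measurableC; exact: measurable_itv.
- exact: prob_notin01 (c_density _ (ltn0Sn k)).
- by move=> w /= notin01 in01; apply: notin01 => _; move: in01; rewrite /= in_itv.
Qed.

Lemma sep_of_not_close_pair w t : ~ close_pair t w ->
  (forall k, (0 < k)%N -> 0 <= c k w <= 1) ->
  forall i j, (0 < i)%N -> (0 < j)%N -> (i <= 2 ^ t)%N -> (j <= 2 ^ t)%N -> i != j ->
  (2 ^+ (3 * t))^-1 <= `|c i w - c j w|.
Proof.
move=> not_close w01 i j i0 j0 it jt ij; rewrite leNgt; apply/negP => ij_close.
have ii_close : `|c i w - c i w| < (2 ^+ (3 * t))^-1 :> R.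
  by rewrite subrr normr0 invr_gt0 exprn_gt0.
have [u_le j_in] := dyadic_window_near (w01 i i0) ij_close.
have [_ i_in] := dyadic_window_near (w01 i i0) ii_close.
apply: not_close; rewrite /close_pair -bigcup_seq.
exists (Num.truncn (c i w * 2 ^+ (3 * t))).
  by apply: set_mem; rewrite mem_setE mem_iota ltnS.
apply: at_least_in_card; apply/card_gt1P.
have i1 : (i.-1 < 2 ^ t)%N by lia.
have j1 : (j.-1 < 2 ^ t)%N by lia.
exists (Ordinal i1), (Ordinal j1); rewrite !inE /initial_index /= !prednK //.
split => //.
by apply: contra ij => /eqP[] /(congr1 S); rewrite !prednK // => ->.
Qed.

Lemma window_count_le w p n : ~ crowded_window p w -> (2 ^ p <= n)%N -> (n < 2 ^ p.+1)%N ->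
  forall m y, (m < 3 * p + 7)%N -> 0 <= y <= 1 ->
  \sum_(n <= j < 2 * n) (`|y - c j w| < (2 ^+ m)^-1)%R%:R <= window_count_bound M p m.
Proof.
move=> not_crowded pn np m y mp y01.
have yy_close : `|y - y| < (2 ^+ m)^-1 :> R by rewrite subrr normr0 invr_gt0 exprn_gt0.
have [u_le _] := dyadic_window_near y01 yy_close.
set u := Num.truncn _ in u_le.
pose in_window j := c j w \in dyadic_window m u.
have few : (#|[set k | in_window (block_index p k)]%SET| < window_threshold p m)%N.
  rewrite ltnNge; apply/negP => many; apply: not_crowded.
  rewrite /crowded_window -bigcup_seq; exists m.
    by apply: set_mem; rewrite mem_setE mem_iota.
  rewrite -bigcup_seq; exists u.
    by apply: set_mem; rewrite mem_setE mem_iota ltnS.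
  exact: at_least_in_card.
have near_in : (\sum_(n <= j < 2 * n) (`|y - c j w| < (2 ^+ m)^-1)%R <=
    \sum_(n <= j < 2 * n) in_window j)%N.
  rewrite big_nat [X in (_ <= X)%N]big_nat; apply: leq_sum => j _.
  case: (boolP (_ < _)) => // /(dyadic_window_near y01)[_ j_in].
  by rewrite /in_window (mem_set j_in).
have count_le := count_dyadic_block_le in_window p n pn np.
rewrite -natr_sum.
apply: le_trans (_ : (Num.truncn (72 * M * 2 ^+ p / 2 ^+ m) + (5 * p + 16))%N%:R <= _).
  by rewrite ler_nat; move: few near_in count_le; rewrite /window_threshold; lia.
rewrite natrD lerD2r truncn_le.
by rewrite divr_ge0 ?mulr_ge0 ?exprn_ge0.
Qed.

Lemma log_pair_sum_le_of_good w p n1 n2 K :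
  (forall k, (0 < k)%N -> 0 <= c k w <= 1) -> ~ bad_scale p w -> ~ bad_scale (p + 2) w ->
  (0 < n1)%N -> (n1 <= n2)%N -> (2 ^ p <= n2)%N -> (n2 < 2 ^ p.+1)%N -> (K <= 3 * p + 5)%N ->
  log_pair_sum (c^~ w) n1 n2 (2 ^+ K)^-1 / (n1%:R * n2%:R) <=
    288 * M * (K%:R + 4) ^+ 3 / 2 ^+ K + 90 * (p%:R + 4) ^+ 3 / 2 ^+ p.
Proof.
move=> w01 good_p good_p2 n1_gt0 n12 pn2 n2p Kp.
have ln2_ge0 : 0 <= ln (2 : R) by rewrite ln_ge0 // ler1n.
have sep i j : (0 < i)%N -> (0 < j)%N -> (i < 2 ^ (p + 2))%N -> (j < 2 ^ (p + 2))%N ->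
    i != j -> (2 ^+ (3 * p + 6))^-1 <= `|c i w - c j w|.
  move=> i0 j0 ip jp; rewrite (_ : 3 * p + 6 = 3 * (p + 2))%N; last by lia.
  by apply: sep_of_not_close_pair => //; [move=> ?; apply: good_p2; right | lia | lia].
rewrite ler_pdivrMr ?mulr_gt0 ?ltr0n //; last by lia.
apply: le_trans (log_pair_sum_le_close_pairs (c^~ w) p n1 n2 K n1_gt0 n12 n2p Kp sep) _.
apply: le_trans (_ : \sum_(K <= m < 3 * p + 6) m.+1%:R * ln 2 *
    (n1%:R * window_count_bound M p m) <= _); last first.
  by rewrite mulrC; apply: sum_level_terms_le => //; lia.
apply: ler_sum_nat => m /andP[_ mp]; apply: ler_wpM2l; first exact: mulr_ge0.
apply: close_pairs_le => [i /andP[i1 _]|y y01]; first by apply: w01; lia.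
by apply: window_count_le => //; [move=> ?; apply: good_p; left | lia].
Qed.

Lemma eventually_log_pair_sum_lt w : (forall k, (0 < k)%N -> 0 <= c k w <= 1) ->
  (exists p0, forall p, (p0 <= p)%N -> ~ bad_scale p w) ->
  forall eps, 0 < eps -> exists K N, forall n1 n2, (0 < n1)%N -> (n1 <= n2)%N ->
    (2 ^ N <= n2)%N -> log_pair_sum (c^~ w) n1 n2 (2 ^+ K)^-1 / (n1%:R * n2%:R) < eps.
Proof.
move=> w01 [p0 good] eps eps0.
have eps2 : 0 < eps / 2 by rewrite divr_gt0.
have [K smallK] := cube_div_exp2_eventually_lt _ _ (mulr_ge0 (ler0n R 288) M_ge0) eps2.
have [p1 smallp] := cube_div_exp2_eventually_lt _ _ (ler0n R 90) eps2.
exists K, (maxn p0 (maxn K p1)) => n1 n2 n1_gt0 n12 Nn2.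
have /andP[pn2 n2p] := trunc_log_bounds (isT : (1 < 2)%N) (leq_trans n1_gt0 n12).
have := trunc_log_max (isT : (1 < 2)%N) Nn2; set p := trunc_log 2 n2 in pn2 n2p * => Np.
have [p0p Kp p1p] : [/\ p0 <= p, K <= 3 * p + 5 & p1 <= p]%N by split; lia.
apply: le_lt_trans (log_pair_sum_le_of_good w p n1 n2 K w01 (good p p0p)
  (good (p + 2) (leq_trans p0p (leq_addr 2 p))) n1_gt0 n12 pn2 n2p Kp) _.
by rewrite [X in _ < X](splitr eps) ltrD // ?smallK ?smallp.
Qed.

End bad_scales.

Theorem lemma2p3 (d : measure_display) (T : measurableType d) (R : realType)
  (P : probability T R) (c : nat -> T -> R) (f : R -> R) (lambda : R)
  (l : nat -> R)
  (hmeas : forall k, (0 < k)%N -> measurable_fun setT (c k))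
  (hindep : mutually_independent P [set k | (0 < k)%N] c)
  (hfmeas : measurable_fun setT f)
  (hfge0 : forall x, 0 <= f x)
  (hfbd : exists M : R, forall x, f x <= M)
  (hfpos : {ae (@lebesgue_measure R), forall x, x \in `[0%R, 1%R]%classic -> 0 < f x})
  (hdistr : forall k, (0 < k)%N -> forall A : set R, measurable A ->
     P (c k @^-1` A) = (\int[@lebesgue_measure R]_(x in A `&` `[0%R, 1%R]%classic) (f x)%:E)%E)
  (hlambda : 0 < lambda)
  (hl : forall k, l k = expR (- lambda * k%:R)) :
  {ae P, forall w,
    forall eps : R, 0 < eps -> exists2 delta : R, 0 < delta &
      exists N : nat, forall n : nat, (N <= n)%N ->
        forall a b : nat, (a%:Z <= @qlog R n)%R -> (b%:Z <= @qlog R n)%R ->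
          (\sum_(2 ^ a * n <= i < 2 ^ a.+1 * n)
             \sum_(2 ^ b * n <= j < 2 ^ b.+1 * n
                    | (i != j) && (`|c i w - c j w| < delta))
                (- ln `|c i w - c j w|))
          / ((2 ^ a * n)%:R * (2 ^ b * n)%:R) < eps}.
Proof.
have [M f_le] := hfbd.
have in01 := ae_in01 hmeas hdistr.
have eventually_good := ae_eventually_not_bad hmeas hindep hfmeas hfge0 f_le hdistr.
apply: filterS2 in01 eventually_good => w w01 good eps eps0.
have [K [N small]] := eventually_log_pair_sum_lt hfge0 f_le w w01 good eps eps0.
exists (2 ^+ K)^-1; first by rewrite invr_gt0 exprn_gt0.
exists (2 ^ N)%N => n Nn a b _ _.
have Nle k : (2 ^ N <= 2 ^ k * n)%N by apply: leq_trans Nn _; rewrite leq_pmull ?expn_gt0.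
have pos k : (0 < 2 ^ k * n)%N by apply: leq_trans (Nle k); rewrite expn_gt0.
rewrite !expnS -!mulnA.
have [ab|/ltnW ba] := leqP (2 ^ a * n) (2 ^ b * n); first exact: small.
by move: (small _ _ (pos b) ba (Nle a)); rewrite log_pair_sum_sym (mulrC (2 ^ b * n)%:R).
Qed.
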